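(* Let $M$ be a nonzero $\mathscr{D}(R,V)$-module. Either $\mathrm{Ann}_R(M) = (0)$ or $\mathrm{Ann}_R(M) = \pi^\ell R$ for some $\ell \geq 1$.
   Context: Let $(V, \pi V, k)$ be a DVR of mixed characteristic $(0,p)$ (i.e. $V$ has characteristic zero, maximal ideal generated by $\pi$, and residue field $k$ of characteristic $p>0$), and let $R$ be either $V[[x_1, \ldots, x_n]]$ or $V[x_1, \ldots, x_n]$ for some $n \geq 0$. $\mathscr{D}(R,V)$ denotes the ring of $V$-linear differential operators on $R$, and $\mathscr{D}(R,V)$-modules are left modules over it. *)

From HB Require Import structures.
From mathcomp Require Import all_boot all_order all_algebra.
From mathcomp Require Import mpoly.
Set Implicit Arguments. Unset Strict Implicit. Unset Printing Implicit Defensive.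
Import Order.TTheory GRing.Theory.
Local Open Scope ring_scope.

(* characteristic 0 and its residue field V/piV has characteristic p > 0   *)
(* (p prime, p = 0 in V/piV, i.e. pi divides p in V).                      *)
Definition is_DVR_unif (V : idomainType) (pi : V) : Prop :=
  [/\ pi != 0, pi \isn't a GRing.unit &
      forall a : V, a != 0 ->
        exists u : V, exists k : nat, u \is a GRing.unit /\ a = u * pi ^+ k].

Definition mixed_char (V : idomainType) (pi : V) (p : nat) : Prop :=
  [/\ (forall m : nat, (0 < m)%N -> (m%:R : V) != 0),
      prime p & exists c : V, (p%:R : V) = pi * c].

Section PowerSeries.
Variables (V : nzRingType) (n : nat).
Definition pseries := 'X_{1..n} -> V.
Definition ps_add (f g : pseries) : pseries := fun m => f m + g m.
Definition ps_opp (f : pseries) : pseries := fun m => - f m.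
Definition ps_zero : pseries := fun _ => 0.
Definition ps_scale (c : V) (f : pseries) : pseries := fun m => c * f m.
Definition ps_mul (f g : pseries) : pseries := fun m =>
  \sum_(d : 'X_{1..n < (mdeg m).+1} | lem (bmnm d) m)
     f (bmnm d) * g (mnm_sub m (bmnm d)).
End PowerSeries.

(* Grothendieck differential operators on a V-algebra R, D(R,V), as a       *)
Section DiffOps.
Variables (V : nzRingType) (R : Type) (addR : R -> R -> R) (oppR : R -> R)
  (mulR : R -> R -> R) (scaleR : V -> R -> R).

Definition Vlinear (phi : R -> R) : Prop :=
  (forall a b, phi (addR a b) = addR (phi a) (phi b)) /\
  (forall (c : V) a, phi (scaleR c a) = scaleR c (phi a)).

Fixpoint diffop_ord (k : nat) (phi : R -> R) : Prop :=
  match k with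
  | 0 => Vlinear phi /\ (forall r s, phi (mulR r s) = mulR r (phi s))
  | k'.+1 => Vlinear phi /\
      (forall r, diffop_ord k' (fun s => addR (phi (mulR r s)) (oppR (mulR r (phi s)))))
  end.

Definition diffop (phi : R -> R) : Prop := exists k, diffop_ord k phi.

Definition is_Dmodule (M : zmodType) (act : (R -> R) -> M -> M) : Prop :=
  [/\ forall phi psi m, diffop phi -> diffop psi ->
        act (fun s => addR (phi s) (psi s)) m = act phi m + act psi m,
      forall phi psi m, diffop phi -> diffop psi ->
        act (fun s => phi (psi s)) m = act phi (act psi m),
      forall m, act (fun s => s) m = m &
      forall phi m1 m2, diffop phi -> act phi (m1 + m2) = act phi m1 + act phi m2].

(* Ann_R(M), R acting on M through R = D^0 (multiplication operators). *)
Definition AnnR (M : zmodType) (act : (R -> R) -> M -> M) (r : R) : Prop :=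
  forall m : M, act (mulR r) m = 0.

Definition ann_zero_or_pi_power (zeroR : R) (pi : V)
  (M : zmodType) (act : (R -> R) -> M -> M) : Prop :=
  (forall r, AnnR act r <-> r = zeroR) \/
  (exists l : nat, (1 <= l)%N /\
     forall r, AnnR act r <-> exists s : R, r = scaleR (pi ^+ l) s).
End DiffOps.

From HB Require Import structures.
From mathcomp Require Import all_boot all_order all_algebra.
From mathcomp Require Import mpoly.
From mathcomp Require Import boolp zify.
Set Implicit Arguments. Unset Strict Implicit. Unset Printing Implicit Defensive.
Import Order.TTheory GRing.Theory.
Local Open Scope ring_scope.

(** The annihilator I = Ann_R(M) is an ideal of R which is stable under every
    Hasse-Schmidt derivation (D_k), e.g. the divided partial derivatives
    d_i^[k] = (1/k!) (d/dx_i)^k, defined over V: these are differential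
    operators, and expanding 0 = D_k (r m) by the Leibniz rule leaves D_k(r) m
    once D_j(r) is known to lie in I for j < k.
    Let 0 <> r in I, let pi^v be the least power of pi dividing a coefficient
    of r, attained at the monomial x^b, so that r = pi^v s.  The multi-index
    derivative d^[b] r lies in I and has constant term r_b = unit * pi^v.  For
    power series d^[b] r is then pi^v times a unit, whence pi^v in I.  For
    polynomials, induction on deg r - deg b shows that every coefficient r_b
    lies in I, whence again pi^v in I.  So I = 0 or I = pi^l R for the least l
    with pi^l in I, and l >= 1 because 1 is not in I when M <> 0. *)

Section DifferentialOperators.
Variables (V : comNzRingType) (R : comAlgType V).

Local Notation Vlin := (@Vlinear V R +%R *:%R).
Local Notation Diff := (@diffop_ord V R +%R -%R *%R *:%R).
Local Notation Diffop := (@diffop V R +%R -%R *%R *:%R).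

Lemma diffop_ord_zero k : Diff k (fun _ => 0).
Proof.
have lin0 : Vlin (fun _ => 0) by split=> *; rewrite ?addr0 ?scaler0.
elim: k => [|k IHk] /=; split=> //; first by move=> r s; rewrite mulr0.
move=> r; suff -> : (fun _ : R => 0 + - (r * 0)) = (fun _ => 0) by [].
by apply: funext => s; rewrite mulr0 oppr0 addr0.
Qed.

Lemma diffop_ordD k phi psi :
  Diff k phi -> Diff k psi -> Diff k (fun s => phi s + psi s).
Proof.
elim: k phi psi => [|k IHk] phi psi /= [[phiD phiZ] phiC] [[psiD psiZ] psiC].
all: split; first by split=> *; rewrite ?phiD ?psiD ?phiZ ?psiZ ?scalerDr // addrACA.
  by move=> r s; rewrite phiC psiC mulrDr.
move=> r; have := IHk _ _ (phiC r) (psiC r).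
congr Diff; apply: funext => s /=.
by rewrite mulrDr opprD addrACA.
Qed.

Lemma diffop_ord_mull k g phi : Diff k phi -> Diff k (fun s => g * phi s).
Proof.
elim: k phi => [|k IHk] phi /= [[phiD phiZ] phiC].
all: split; first by split=> *; rewrite ?phiD ?phiZ ?mulrDr ?scalerAr.
  by move=> r s; rewrite phiC mulrCA.
move=> r; have := IHk _ (phiC r); congr Diff; apply: funext => s /=.
by rewrite mulrDr mulrCA mulrN.
Qed.

Lemma diffop_ordS k phi : Diff k phi -> Diff k.+1 phi.
Proof.
elim: k phi => [|k IHk] phi [phi_lin phiC]; split=> // r; last exact: IHk _ (phiC r).
suff -> : (fun s => phi (r * s) + - (r * phi s)) = (fun _ => 0).
  exact: diffop_ord_zero.
by apply: funext => s; rewrite phiC subrr.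
Qed.

Lemma diffop_ord_le k k' phi : (k <= k')%N -> Diff k phi -> Diff k' phi.
Proof.
move=> /subnK <-; elim: (k' - k)%N => // d IHd phik.
by rewrite addSn; apply/diffop_ordS/IHd.
Qed.

Lemma diffop_ord_sum k m (F : 'I_m -> R -> R) :
  (forall i, Diff k (F i)) -> Diff k (fun s => \sum_(i < m) F i s).
Proof.
elim: m F => [|m IHm] F DF.
  suff -> : (fun s => \sum_(i < 0) F i s) = (fun _ => 0) by exact: diffop_ord_zero.
  by apply: funext => s; rewrite big_ord0.
suff -> : (fun s => \sum_(i < m.+1) F i s) =
          (fun s => \sum_(i < m) F (widen_ord (leqnSn m) i) s + F ord_max s).
  by apply: diffop_ordD; [apply: (IHm (fun i => F (widen_ord _ i))) | apply: DF].
by apply: funext => s; rewrite big_ord_recr.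
Qed.

Lemma diffop_ord0_mul r : Diff 0 ( *%R r).
Proof. by split; [split=> *; rewrite ?mulrDr ?scalerAr | move=> *; rewrite mulrCA]. Qed.

Lemma diffop_mul r : Diffop ( *%R r).
Proof. by exists 0%N; apply: diffop_ord0_mul. Qed.

Lemma diffop_sum m (F : 'I_m -> R -> R) :
  (forall i, Diffop (F i)) -> Diffop (fun s => \sum_(i < m) F i s).
Proof.
move=> /choice [K FK]; exists (\max_i K i); apply: diffop_ord_sum => i.
exact: diffop_ord_le (leq_bigmax i) (FK i).
Qed.

Definition hasse_schmidt (D : nat -> R -> R) : Prop :=
  [/\ D 0%N =1 id, forall k, Vlin (D k) &
      forall k r s, D k (r * s) = \sum_(j < k.+1) D j r * D (k - j)%N s].

Lemma hasse_schmidt_diffop_ord D : hasse_schmidt D -> forall k, Diff k (D k).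
Proof.
move=> [D0 D_lin DM] k; elim/ltn_ind: k => -[_|k IHk].
  by rewrite (funext D0); split=> //; split.
split=> // r.
suff -> : (fun s => D k.+1 (r * s) + - (r * D k.+1 s)) =
          (fun s => \sum_(j < k.+1) D j.+1 r * D (k - j)%N s).
  apply: diffop_ord_sum => j; apply/diffop_ord_mull/(diffop_ord_le (leq_subr j k)).
  by apply: IHk; rewrite ltnS leq_subr.
by apply: funext => s; rewrite DM big_ord_recl D0 subn0 addrC addKr.
Qed.

End DifferentialOperators.

Section MultiIndexHasse.
Variables (n : nat) (T : Type) (D : 'I_n -> nat -> T -> T).

Definition hasse_multi (b : 'X_{1..n}) (f : T) : T :=
  foldr (fun i g => D i (b i) g) f (index_enum 'I_n).

Variables (V : nmodType) (coef : T -> 'X_{1..n} -> V).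
Hypothesis coef_D : forall i k f d,
  coef (D i k f) d = coef f (d + U_(i) *+ k)%MM *+ 'C(d i + k, k).

Lemma coef_hasse_multi b f d :
  coef (hasse_multi b f) d = coef f (d + b)%MM *+ \prod_(i < n) 'C(d i + b i, b i).
Proof.
suff coef_foldr s : uniq s -> forall d,
    coef (foldr (fun i g => D i (b i) g) f s) d =
    coef f (d + \sum_(i <- s) U_(i) *+ b i)%MM *+ \prod_(i <- s) 'C(d i + b i, b i).
  by rewrite /hasse_multi coef_foldr ?index_enum_uniq // -multinomUE_id.
elim: s => [_|i s IHs /= /andP[i_notin_s s_uniq]] {}d.
  by rewrite !big_nil addm0.
rewrite coef_D IHs // !big_cons addmA -mulrnA mulnC; congr (_ *+ (_ * _)).
apply: eq_big_seq => j j_in_s; rewrite mnmDE mulmnE mnm1E.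
have /negbTE -> : i != j by apply: contraNneq i_notin_s => ->.
by rewrite mul0n addn0.
Qed.

End MultiIndexHasse.

Section Annihilator.
Variables (V : comNzRingType) (R : comAlgType V).
Variables (M : zmodType) (act : (R -> R) -> M -> M).
Hypothesis actM : is_Dmodule +%R -%R *%R *:%R act.

Local Notation Diffop := (@diffop V R +%R -%R *%R *:%R).
Local Notation ann := (AnnR *%R act).

Lemma act_opD phi psi m : Diffop phi -> Diffop psi ->
  act (fun s => phi s + psi s) m = act phi m + act psi m.
Proof. by case: actM => opD _ _ _; apply: opD. Qed.

Lemma act_comp phi psi m : Diffop phi -> Diffop psi ->
  act (fun s => phi (psi s)) m = act phi (act psi m).
Proof. by case: actM => _ comp _ _; apply: comp. Qed.

Lemma act_id m : act id m = m.
Proof. by case: actM. Qed.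

Lemma actD phi m1 m2 : Diffop phi -> act phi (m1 + m2) = act phi m1 + act phi m2.
Proof. by case: actM => _ _ _ D; apply: D. Qed.

Lemma act0 phi : Diffop phi -> act phi 0 = 0.
Proof. by move=> Dphi; apply: (@addrI _ (act phi 0)); rewrite -actD // !addr0. Qed.

Lemma act_op0 m : act (fun _ => 0) m = 0.
Proof.
have D0 : Diffop (fun _ => 0) by exists 0%N; apply: diffop_ord_zero.
by apply: (@addrI _ (act (fun _ => 0) m)); rewrite -act_opD // !addr0.
Qed.

Lemma act_op_sum k (F : 'I_k -> R -> R) m : (forall i, Diffop (F i)) ->
  act (fun s => \sum_(i < k) F i s) m = \sum_(i < k) act (F i) m.
Proof.
elim: k F => [|k IHk] F DF.
  rewrite big_ord0 -(act_op0 m); congr act; apply: funext => s; exact: big_ord0.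
rewrite big_ord_recr -(IHk (fun i => F (widen_ord (leqnSn k) i))) //.
rewrite /= -act_opD //; last exact: diffop_sum.
by congr act; apply: funext => s; rewrite big_ord_recr.
Qed.

Lemma ann0 : ann 0.
Proof.
move=> m; rewrite -(act_op0 m); congr act; apply: funext => s; exact: mul0r.
Qed.

Lemma annM r s : ann r -> ann (r * s).
Proof.
move=> ann_r m.
have -> : *%R (r * s) = (fun t => r * (s * t)) by apply: funext => t; rewrite mulrA.
by rewrite act_comp ?ann_r //; apply: diffop_mul.
Qed.

Lemma annD r s : ann r -> ann s -> ann (r + s).
Proof.
move=> ann_r ann_s m.
have -> : *%R (r + s) = (fun t => r * t + s * t) by apply: funext => t; rewrite mulrDl.
by rewrite act_opD ?ann_r ?ann_s ?addr0 //; apply: diffop_mul.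
Qed.

Lemma annB r s : ann r -> ann s -> ann (r - s).
Proof. by move=> ann_r ann_s; apply: annD => //; rewrite -mulrN1; apply: annM. Qed.

Lemma annZ c r : ann r -> ann (c *: r).
Proof. by move=> ann_r; rewrite -[r]mulr1 scalerAr; apply: annM. Qed.

Lemma ann_hasse_schmidt D : hasse_schmidt D -> forall k r, ann r -> ann (D k r).
Proof.
move=> HD k r ann_r; have [D0 _ DM] := HD.
have DD j : Diffop (D j) by exists j; apply: hasse_schmidt_diffop_ord.
have DDl j g : Diffop (fun s => g * D j s).
  by exists j; apply/diffop_ord_mull/hasse_schmidt_diffop_ord.
elim/ltn_ind: k => k IHk m.
have := act_comp m (DD k) (diffop_mul r); rewrite ann_r act0 // (funext (DM k r)).
rewrite act_op_sum // big_ord_recr big1 /= => [|j _]; last first.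
  by rewrite (act_comp _ (diffop_mul _) (DD _)) IHk.
by rewrite add0r subnn (act_comp _ (diffop_mul _) (DD _)) (funext D0) act_id.
Qed.

Lemma ann_hasse_multi n (D : 'I_n -> nat -> R -> R) :
  (forall i, hasse_schmidt (D i)) -> forall b r, ann r -> ann (hasse_multi D b r).
Proof.
move=> HD b r ann_r; rewrite /hasse_multi.
by elim: (index_enum _) => //= i s IHs; apply: ann_hasse_schmidt.
Qed.

Lemma ann_zero_or_pi_power_criterion (pi : V) : (exists m : M, m != 0) ->
  (forall r, ann r -> r != 0 ->
     exists v, ann (pi ^+ v)%:A /\ exists s, r = pi ^+ v *: s) ->
  ann_zero_or_pi_power *%R *:%R 0 pi act.
Proof.
move=> [m0 m0_neq0] pi_content.
have [[r [ann_r r_neq0]]|ann_eq0] := pselect (exists r, ann r /\ r != 0); last first.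
  left=> r; split=> [ann_r|->]; last exact: ann0.
  by apply/eqP/negPn/negP => r_neq0; apply: ann_eq0; exists r.
have pi_ann : exists v, `[< ann (pi ^+ v)%:A >].
  by have [v [ann_v _]] := pi_content r ann_r r_neq0; exists v; apply/asboolP.
case: (ex_minnP pi_ann) => l /asboolP ann_l l_min; right; exists l; split.
  rewrite lt0n; apply: contraNneq m0_neq0 => l0.
  move: (ann_l m0); rewrite l0 expr0 scale1r.
  have -> : *%R (1 : R) = id by apply: funext => s; rewrite mul1r.
  by rewrite act_id => ->.
move=> s; split=> [ann_s|[t ->]]; last by rewrite -[t]mul1r scalerAl; apply: annM.
have [->|s_neq0] := eqVneq s 0; first by exists 0; rewrite scaler0.
have [v [ann_v [t ->]]] := pi_content s ann_s s_neq0.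
have /subnKC <- := l_min v (asboolT ann_v).
by exists (pi ^+ (v - l) *: t); rewrite scalerA -exprD.
Qed.

End Annihilator.

Lemma dvr_min_valuation (V : idomainType) (pi : V) (T : Type) (c : T -> V) t1 :
  is_DVR_unif pi -> c t1 != 0 ->
  exists v t0 u (w : T -> V),
    [/\ u \is a GRing.unit, c t0 = u * pi ^+ v & forall t, c t = pi ^+ v * w t].
Proof.
move=> [_ _ val] ct1_neq0.
have val_ex : exists k, `[< exists t u, u \is a GRing.unit /\ c t = u * pi ^+ k >].
  by have [u [k [u_unit e]]] := val _ ct1_neq0; exists k; apply/asboolP; exists t1, u.
case: (ex_minnP val_ex) => v /asboolP [t0 [u [u_unit ct0]]] v_min.
have /choice [w cw] : forall t, exists w, c t = pi ^+ v * w.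
  move=> t; have [->|ct_neq0] := eqVneq (c t) 0; first by exists 0; rewrite mulr0.
  have [u' [k [u'_unit ct]]] := val _ ct_neq0.
  have v_le_k : (v <= k)%N by apply/v_min/asboolP; exists t, u'.
  by exists (u' * pi ^+ (k - v)); rewrite ct -{1}(subnKC v_le_k) exprD mulrCA.
by exists v, t0, u, w.
Qed.

Lemma coef_XaddC_exp (R : comNzRingType) (c : R) a k :
  (('X + c%:P) ^+ a)`_k = c ^+ (a - k) *+ 'C(a, k).
Proof.
rewrite addrC exprDn.
under eq_bigr => j _ do rewrite -rmorphXn mul_polyC scalerMnl.
rewrite coef_sumMXn (big_ord1_eq _ (fun j => c ^+ (a - j) *+ 'C(a, j))) ltnS.
by case: leqP => // a_lt_k; rewrite bin_small ?mulr0n.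
Qed.

Section HasseDerivativeMPoly.
Variables (V : comNzRingType) (n : nat).
Local Notation MP := {mpoly V[n]}.

(* f(x + t e_i), a polynomial in t over V[x] whose coefficients are the divided
   derivatives of f in x_i. *)
Definition taylor (i : 'I_n) (f : MP) : {poly MP} :=
  mmap (polyC \o @mpolyC n V) (fun j => 'X *+ (j == i) + ('X_j)%:P) f.

Definition hderiv (i : 'I_n) (k : nat) (f : MP) : MP := (taylor i f)`_k.

Lemma hderivD i k : {morph hderiv i k : f g / f + g}.
Proof. by move=> f g; rewrite /hderiv /taylor mmapD coefD. Qed.

Lemma hderivZ i k c f : hderiv i k (c *: f) = c *: hderiv i k f.
Proof. by rewrite /hderiv /taylor mmapZ /= coefCM mul_mpolyC. Qed.

Lemma hderivM i k f g :
  hderiv i k (f * g) = \sum_(j < k.+1) hderiv i j f * hderiv i (k - j) g.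
Proof. by rewrite /hderiv /taylor rmorphM coefM. Qed.

Lemma hderivX i k m : hderiv i k 'X_[m] = 'X_[m - U_(i) *+ k] *+ 'C(m i, k).
Proof.
rewrite /hderiv /taylor mmapX /mmap1 (bigD1 i) //= eqxx mulr1n.
rewrite (eq_bigr (fun j => (('X_j ^+ m j : MP)%:P))) => [|j /negbTE ->]; last first.
  by rewrite mulr0n add0r rmorphXn.
rewrite -rmorph_prod coefMC coef_XaddC_exp mulrnAl [in RHS]mpolyXE_id.
rewrite [in RHS](bigD1 i) //= mnmBE mulmnE mnm1E eqxx mul1n.
congr (_ * _ *+ _).
apply: eq_bigr => j /negbTE ij; rewrite mnmBE mulmnE mnm1E eq_sym ij.
by rewrite mul0n subn0.
Qed.

Lemma mcoeff_hderiv i k (f : MP) d :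
  (hderiv i k f)@_d = f@_(d + U_(i) *+ k) *+ 'C(d i + k, k).
Proof.
elim/mpolyind: f => [|c m f _ _ IHf].
  by rewrite /hderiv /taylor mmap0 coef0 2!mcoeff0 mul0rn.
rewrite hderivD hderivZ 2!mcoeffD 2!mcoeffZ mulrnDl; congr (_ + _) => //.
rewrite hderivX mcoeffMn -mulrnAr; congr (c * _); rewrite 2!mcoeffX.
have [k_le|k_gt] := leqP k (m i).
  have -> : (m - U_(i) *+ k == d)%MM = (m == d + U_(i) *+ k)%MM.
    apply/eqP/eqP => [<-|->]; last by rewrite addmK.
    apply/mnmP => j; rewrite mnmDE mnmBE mulmnE mnm1E.
    by case: (i =P j) => [<-|_]; rewrite ?mul1n ?mul0n ?subnK ?subn0 ?addn0.
  by case: eqP => [->|_]; rewrite ?mul0rn // mnmDE mulmnE mnm1E eqxx mul1n.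
rewrite bin_small // mulr0n; case: eqP => [m_eq|_]; last by rewrite mul0rn.
by move: k_gt; rewrite m_eq mnmDE mulmnE mnm1E eqxx mul1n ltnNge leq_addl.
Qed.

Lemma hderiv0 i (f : MP) : hderiv i 0 f = f.
Proof. by apply/mpolyP => d; rewrite mcoeff_hderiv mulm0n addm0 addn0 bin0. Qed.

Lemma hderiv_hasse_schmidt i : hasse_schmidt (hderiv i : nat -> MP -> MP).
Proof.
split=> [f|k|k f g]; [exact: hderiv0 | split | exact: hderivM].
  exact: hderivD.
exact: hderivZ.
Qed.

End HasseDerivativeMPoly.

Section PolynomialCase.
Variables (V : idomainType) (pi : V) (n : nat).
Hypothesis piDVR : is_DVR_unif pi.
Local Notation MP := {mpoly V[n]}.
Variables (M : zmodType) (act : (MP -> MP) -> M -> M).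
Hypothesis actM : is_Dmodule +%R -%R *%R *:%R act.
Local Notation ann := (AnnR *%R act).
Local Notation hderivm := (hasse_multi (@hderiv V n)).

Lemma mcoeff_hderivm b f d :
  (hderivm b f)@_d = f@_(d + b) *+ \prod_(i < n) 'C(d i + b i, b i).
Proof. exact: (coef_hasse_multi (coef := fun f d => f@_d) (@mcoeff_hderiv V n)). Qed.

Lemma ann_of_mcoeff q : (forall m, ann (q@_m)%:A) -> ann q.
Proof.
move=> ann_q; rewrite (mpolyE q); apply: big_ind => [|x y|m _].
- exact: ann0.
- exact: annD.
- by rewrite -['X_[m]]mul1r scalerAl; apply: annM.
Qed.

Lemma ann_mcoeff r : ann r -> forall b, ann (r@_b)%:A.
Proof.
move=> ann_r; suff ann_coef t b : (msize r <= mdeg b + t)%N -> ann (r@_b)%:A.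
  by move=> b; apply: (ann_coef (msize r)); rewrite leq_addl.
elim: t b => [|t IHt] b size_r.
  rewrite addn0 in size_r; rewrite (memN_msupp_eq0 (msize_mdeg_ge size_r)).
  by rewrite scale0r; apply: ann0.
(* The other coefficients of d^[b] r are multiples of coefficients of r at
   monomials of larger degree. *)
have ann_q : ann (hderivm b r - (r@_b)%:A).
  apply: ann_of_mcoeff => m; rewrite mcoeffB mcoeffZ mcoeff1 mcoeff_hderivm.
  have [->|m_neq0] := eqVneq m 0%MM.
    rewrite add0m big1 => [|i _]; last by rewrite mnm0E add0n binn.
    by rewrite mulr1 subrr scale0r; apply: ann0.
  rewrite mulr0 subr0 -scalerMnl -mulr_natr; apply/(annM actM)/IHt.
  have : (0 < mdeg m)%N by rewrite lt0n mdeg_eq0.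
  by rewrite mdegD; move: size_r; lia.
have := annB actM (ann_hasse_multi actM (@hderiv_hasse_schmidt V n) b ann_r) ann_q.
by rewrite opprB addrC subrK.
Qed.

Lemma mpoly_ann_pi_content r : ann r -> r != 0 ->
  exists v, ann (pi ^+ v)%:A /\ exists s, r = pi ^+ v *: s.
Proof.
move=> ann_r r_neq0.
have [b rb_neq0] : exists b, r@_b != 0.
  case supp_r: (msupp r) => [|b s]; first by move: r_neq0; rewrite -msupp_eq0 supp_r.
  by exists b; rewrite -mcoeff_msupp supp_r inE eqxx.
have [v [t0 [u [w [u_unit rt0 rw]]]]] :=
  dvr_min_valuation (c := fun b => r@_b) piDVR rb_neq0.
exists v; split.
  have := annZ actM (u^-1) (ann_mcoeff ann_r t0).
  by rewrite scalerA rt0 mulrA mulVr ?mul1r.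
exists (\sum_(b <- msupp r) w b *: 'X_[b]).
by rewrite {1}(mpolyE r) scaler_sumr; apply: eq_bigr => m _; rewrite scalerA -rw.
Qed.

End PolynomialCase.

Lemma mdeg_lepm (n : nat) (d m : 'X_{1..n}) : (d <= m)%MM -> (mdeg d <= mdeg m)%N.
Proof. by move=> /submK <-; rewrite mdegD leq_addl. Qed.

Lemma lepm_add (n : nat) (m1 m2 d1 d2 : 'X_{1..n}) :
  (m1 <= d1)%MM -> (m2 <= d2)%MM -> (m1 + m2 <= d1 + d2)%MM.
Proof.
move=> /mnm_lepP le1 /mnm_lepP le2; apply/mnm_lepP => i.
by rewrite !mnmDE leq_add.
Qed.

Lemma lepm_mulmn (n : nat) (m : 'X_{1..n}) j k : (j <= k)%N -> (m *+ j <= m *+ k)%MM.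
Proof. by move=> j_le_k; apply/mnm_lepP => i; rewrite !mulmnE leq_mul2l j_le_k orbT. Qed.

Section PowerSeriesRing.
Variables (V : comNzRingType) (n : nat).
Local Notation MP := {mpoly V[n]}.
Local Notation PS := (pseries V n).
Implicit Types (f g h : PS) (P Q : MP) (d m : 'X_{1..n}).

(* The coefficient of f * g at m only depends on the truncations of f and g below
   m, so the ring laws of power series are inherited from polynomials. *)
Definition agree_below m f P := forall d, (d <= m)%MM -> f d = P@_d.

Lemma agree_below_le m m' f P :
  (m' <= m)%MM -> agree_below m f P -> agree_below m' f P.
Proof. by move=> m'_le_m fP d d_le_m'; apply: fP; apply: lepm_trans m'_le_m. Qed.

Lemma ps_mul_agree m f g P Q :
  agree_below m f P -> agree_below m g Q -> ps_mul f g m = (P * Q)@_m.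
Proof.
move=> fP gQ; rewrite /ps_mul (mcoeff_poly_mul_lin _ _ (k := (mdeg m).+1)) //.
by apply: eq_bigr => d d_le_m; rewrite fP // gQ // lem_subr.
Qed.

Lemma agree_below_mul m f g P Q :
  agree_below m f P -> agree_below m g Q -> agree_below m (ps_mul f g) (P * Q).
Proof.
move=> fP gQ d d_le_m.
by apply: ps_mul_agree; [apply: agree_below_le fP | apply: agree_below_le gQ].
Qed.

Lemma agree_below_add m f g P Q :
  agree_below m f P -> agree_below m g Q -> agree_below m (ps_add f g) (P + Q).
Proof. by move=> fP gQ d d_le_m; rewrite /ps_add mcoeffD fP ?gQ. Qed.

Lemma agree_below_scale m c f P :
  agree_below m f P -> agree_below m (ps_scale c f) (c *: P).
Proof. by move=> fP d d_le_m; rewrite /ps_scale mcoeffZ fP. Qed.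

Definition ps_trunc k f : MP := \sum_(d : 'X_{1..n < k}) f d *: 'X_[d].

Lemma agree_below_trunc m f : agree_below m f (ps_trunc (mdeg m).+1 f).
Proof. by move=> d d_le_m; rewrite mcoeff_mpoly // ltnS mdeg_lepm. Qed.
Arguments agree_below_trunc : clear implicits.

Definition ps_one : PS := fun m => (m == 0%MM)%:R.

Lemma agree_below_one m : agree_below m ps_one 1.
Proof. by move=> d _; rewrite mcoeff1. Qed.
Arguments agree_below_one : clear implicits.

Lemma ps_addA : associative (@ps_add V n).
Proof. by move=> f g h; apply: funext => m; apply: addrA. Qed.

Lemma ps_addC : commutative (@ps_add V n).
Proof. by move=> f g; apply: funext => m; apply: addrC. Qed.

Lemma ps_add0 : left_id (@ps_zero V n) (@ps_add V n).
Proof. by move=> f; apply: funext => m; apply: add0r. Qed.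

Lemma ps_addN : left_inverse (@ps_zero V n) (@ps_opp V n) (@ps_add V n).
Proof. by move=> f; apply: funext => m; apply: addNr. Qed.

Lemma ps_mulC : commutative (@ps_mul V n).
Proof.
move=> f g; apply: funext => m.
have tf := agree_below_trunc m f; have tg := agree_below_trunc m g.
by rewrite (ps_mul_agree tf tg) (ps_mul_agree tg tf) mulrC.
Qed.

Lemma ps_mulA : associative (@ps_mul V n).
Proof.
move=> f g h; apply: funext => m; have tf := agree_below_trunc m f.
have tg := agree_below_trunc m g; have th := agree_below_trunc m h.
rewrite (ps_mul_agree tf (agree_below_mul tg th)).
by rewrite (ps_mul_agree (agree_below_mul tf tg) th) mulrA.
Qed.

Lemma ps_mul1 : left_id ps_one (@ps_mul V n).
Proof.
move=> f; apply: funext => m.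
by rewrite (ps_mul_agree (agree_below_one m) (agree_below_trunc m f)) mul1r mcoeff_mpoly.
Qed.

Lemma ps_mulDl : left_distributive (@ps_mul V n) (@ps_add V n).
Proof.
move=> f g h; apply: funext => m; have tf := agree_below_trunc m f.
have tg := agree_below_trunc m g; have th := agree_below_trunc m h.
rewrite (ps_mul_agree (agree_below_add tf tg) th) /ps_add.
by rewrite (ps_mul_agree tf th) (ps_mul_agree tg th) mulrDl mcoeffD.
Qed.

Lemma ps_one_neq0 : ps_one != @ps_zero V n.
Proof.
by apply/eqP => /(congr1 (fun f => f 0%MM)) /eqP; rewrite /ps_one /ps_zero eqxx oner_eq0.
Qed.

HB.instance Definition _ := Choice.copy PS ('X_{1..n} -> V).
HB.instance Definition _ := GRing.isZmodule.Build PS ps_addA ps_addC ps_add0 ps_addN.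
HB.instance Definition _ := GRing.Zmodule_isComNzRing.Build PS
  ps_mulA ps_mulC ps_mul1 ps_mulDl ps_one_neq0.

Lemma ps_scaleA a b f : ps_scale a (ps_scale b f) = ps_scale (a * b) f.
Proof. by apply: funext => m; apply: mulrA. Qed.

Lemma ps_scale1 : left_id 1 (@ps_scale V n).
Proof. by move=> f; apply: funext => m; apply: mul1r. Qed.

Lemma ps_scaleDr : right_distributive (@ps_scale V n) (@ps_add V n).
Proof. by move=> a f g; apply: funext => m; apply: mulrDr. Qed.

Lemma ps_scaleDl f : {morph (@ps_scale V n)^~ f : a b / a + b >-> ps_add a b}.
Proof. by move=> a b; apply: funext => m; apply: mulrDl. Qed.

HB.instance Definition _ := GRing.Zmodule_isLmodule.Build V PS
  ps_scaleA ps_scale1 ps_scaleDr ps_scaleDl.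

Lemma ps_scaleAl a f g : ps_scale a (ps_mul f g) = ps_mul (ps_scale a f) g.
Proof.
apply: funext => m; have tf := agree_below_trunc m f; have tg := agree_below_trunc m g.
rewrite (ps_mul_agree (agree_below_scale a tf) tg).
by rewrite /ps_scale (ps_mul_agree tf tg) -scalerAl mcoeffZ.
Qed.

HB.instance Definition _ := GRing.Lmodule_isLalgebra.Build V PS ps_scaleAl.
HB.instance Definition _ := GRing.Lalgebra_isComAlgebra.Build V PS.

Lemma ps_coefB f g m : (f - g) m = f m - g m. Proof. by []. Qed.
Lemma ps_coefZ c f m : (c *: f) m = c * f m. Proof. by []. Qed.
Lemma ps_coef1 m : (1 : PS) m = (m == 0%MM)%:R. Proof. by []. Qed.

Lemma ps_coef_sum k (F : 'I_k -> PS) m : (\sum_(j < k) F j) m = \sum_(j < k) F j m.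
Proof. by apply: (big_morph (fun f : PS => f m)) => [f g|]. Qed.

End PowerSeriesRing.

Arguments agree_below_trunc {V n} m f.

Section HasseDerivativeSeries.
Variables (V : comNzRingType) (n : nat).
Local Notation PS := (pseries V n).
Implicit Types (f g : PS) (d m : 'X_{1..n}).

Definition ps_hderiv (i : 'I_n) (k : nat) f : PS :=
  fun m => f (m + U_(i) *+ k)%MM *+ 'C(m i + k, k).

Lemma agree_below_hderiv i j k m f P : (j <= k)%N ->
  agree_below (m + U_(i) *+ k) f P -> agree_below m (ps_hderiv i j f) (hderiv i j P).
Proof.
move=> j_le_k fP d d_le_m; rewrite mcoeff_hderiv -fP //.
exact/lepm_add/lepm_mulmn.
Qed.

Lemma ps_hderivM i k f g :
  ps_hderiv i k (f * g) = \sum_(j < k.+1) ps_hderiv i j f * ps_hderiv i (k - j) g.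
Proof.
apply: funext => m; rewrite ps_coef_sum.
set m' := (m + U_(i) *+ k)%MM.
have tf := agree_below_trunc m' f; have tg := agree_below_trunc m' g.
rewrite /ps_hderiv -/m' [(f * g) m'](ps_mul_agree tf tg) -mcoeff_hderiv hderivM.
rewrite raddf_sum; apply: eq_bigr => j _; symmetry; apply: ps_mul_agree.
  by apply: agree_below_hderiv tf; rewrite -ltnS.
exact: agree_below_hderiv (leq_subr _ _) tg.
Qed.

Lemma ps_hderiv_hasse_schmidt i : hasse_schmidt (ps_hderiv i).
Proof.
split=> [f|k|k f g]; last exact: ps_hderivM.
  by apply: funext => m; rewrite /ps_hderiv mulm0n addm0 addn0 bin0.
split=> [f g|c f]; apply: funext => m; first exact: mulrnDl.
exact: esym (mulrnAr _ _ _).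
Qed.

End HasseDerivativeSeries.

Section PowerSeriesInverse.
Variables (V : comUnitRingType) (n : nat).
Local Notation PS := (pseries V n).
Implicit Types (f g q w : PS) (d m : 'X_{1..n}).

Lemma ps_mul_coef_eq m f f' g :
  (forall d, (d <= m)%MM -> f d = f' d) -> (f * g) m = (f' * g) m.
Proof.
move=> ff'; rewrite [LHS]/(ps_mul f g m) [RHS]/(ps_mul f' g m).
by apply: eq_bigr => d d_le_m; rewrite ff'.
Qed.

Lemma ps_exp_coef_eq0 q : q 0%MM = 0 -> forall j d, (mdeg d < j)%N -> (q ^+ j) d = 0.
Proof.
move=> q0; elim=> // j IHj d d_lt; rewrite exprS [LHS]/(ps_mul q (q ^+ j) d).
apply: big1 => e e_le_d; have [e0|e_neq0] := eqVneq (bmnm e) 0%MM.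
  by rewrite e0 q0 mul0r.
rewrite IHj ?mulr0 //; move: (bmnm e) e_le_d e_neq0 => {}e e_le_d e_neq0.
have : (0 < mdeg e)%N by rewrite lt0n mdeg_eq0.
by move: d_lt (mdegD (d - e) e); rewrite submK //; lia.
Qed.

(* u^-1 \sum_j q^j with u = w 0 and q = 1 - u^-1 w; as q 0 = 0, only the
   powers q^j with j <= mdeg d contribute to the coefficient at d. *)
Definition ps_inv w : PS :=
  let q := 1 - (w 0%MM)^-1 *: w in
  fun d => (w 0%MM)^-1 * \sum_(j < (mdeg d).+1) (q ^+ j) d.

Lemma ps_mulVr w : w 0%MM \is a GRing.unit -> ps_inv w * w = 1.
Proof.
move=> w0_unit; set u := w 0%MM; set q := 1 - u^-1 *: w.
have q0 : q 0%MM = 0 by rewrite /q ps_coefB ps_coef1 ps_coefZ eqxx -/u mulVr ?subrr.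
apply: funext => m; set K := (mdeg m).+1.
rewrite (ps_mul_coef_eq (f' := u^-1 *: \sum_(j < K) q ^+ j)) => [|d d_le_m]; last first.
  rewrite /ps_inv -/u -/q ps_coefZ ps_coef_sum; congr (_ * _).
  have dK : ((mdeg d).+1 <= K)%N by rewrite ltnS mdeg_lepm.
  rewrite (big_ord_widen _ (fun j => (q ^+ j) d) dK).
  rewrite [RHS](bigID (fun j : 'I_K => j < (mdeg d).+1)%N) /=.
  by rewrite [X in _ = _ + X]big1 ?addr0 // => j; rewrite -leqNgt => /ps_exp_coef_eq0 ->.
have uw : u^-1 *: w = 1 - q by rewrite /q opprB addrC subrK.
rewrite -scalerAl scalerAr uw -opprB mulrN mulrC -subrX1 opprB.
by rewrite ps_coefB ps_exp_coef_eq0 // subr0.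
Qed.

End PowerSeriesInverse.

Section SeriesCase.
Variables (V : idomainType) (pi : V) (n : nat).
Hypothesis piDVR : is_DVR_unif pi.
Local Notation PS := (pseries V n).
Variables (M : zmodType) (act : (PS -> PS) -> M -> M).
Hypothesis actM : is_Dmodule +%R -%R *%R *:%R act.
Local Notation ann := (AnnR *%R act).
Local Notation hderivm := (hasse_multi (@ps_hderiv V n)).

Lemma ps_coef_hderivm b f d :
  hderivm b f d = f (d + b)%MM *+ \prod_(i < n) 'C(d i + b i, b i).
Proof. exact: (coef_hasse_multi (coef := fun (f : PS) d => f d)). Qed.

Lemma ps_ann_pi_content r : ann r -> r != 0 ->
  exists v, ann (pi ^+ v)%:A /\ exists s, r = pi ^+ v *: s.
Proof.
move=> ann_r r_neq0.
have [b rb_neq0] : exists b, r b != 0.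
  have [//|r_eq0] := pselect (exists b, r b != 0).
  case/eqP: r_neq0; apply: funext => b; apply/eqP/negPn/negP => rb_neq0.
  by apply: r_eq0; exists b.
have [v [t0 [u [w [u_unit rt0 rw]]]]] := dvr_min_valuation (c := r) piDVR rb_neq0.
exists v; split; last by exists w; apply: funext => t; rewrite rw.
have wt0 : w t0 = u.
  have pi_neq0 : pi ^+ v != 0 by case: piDVR => pi_neq0 _ _; rewrite expf_neq0.
  by apply: (mulfI pi_neq0); rewrite -rw rt0 mulrC.
set Dw := hderivm t0 w.
have Dw0_unit : Dw 0%MM \is a GRing.unit.
  rewrite /Dw ps_coef_hderivm add0m big1 ?wt0 // => i _.
  by rewrite mnm0E add0n binn.
have : ann (pi ^+ v *: Dw).
  suff -> : pi ^+ v *: Dw = hderivm t0 r.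
    exact: (ann_hasse_multi actM (@ps_hderiv_hasse_schmidt V n)) ann_r.
  by apply: funext => d; rewrite ps_coefZ /Dw !ps_coef_hderivm rw mulrnAr.
by move=> /(annM actM (ps_inv Dw)); rewrite -scalerAl mulrC ps_mulVr.
Qed.

End SeriesCase.

Theorem theorem3p1 (V : idomainType) (pi : V) (p n : nat)
  (hDVR : is_DVR_unif pi) (hchar : mixed_char pi p) :
  (* R = V[x_1, ..., x_n] *)
  (forall (M : zmodType) (act : ({mpoly V[n]} -> {mpoly V[n]}) -> M -> M),
     is_Dmodule +%R -%R *%R *:%R act -> (exists m : M, m != 0) ->
     ann_zero_or_pi_power *%R *:%R 0 pi act) /\
  (* R = V[[x_1, ..., x_n]] *)
  (forall (M : zmodType) (act : (pseries V n -> pseries V n) -> M -> M),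
     is_Dmodule (@ps_add V n) (@ps_opp V n) (@ps_mul V n) (@ps_scale V n) act ->
     (exists m : M, m != 0) ->
     ann_zero_or_pi_power (@ps_mul V n) (@ps_scale V n)
       (@ps_zero V n) pi act).
Proof.
split=> M act actM M_neq0; apply: (ann_zero_or_pi_power_criterion actM M_neq0).
  exact: mpoly_ann_pi_content.
exact: ps_ann_pi_content.
Qed.
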